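(* Let $\mathcal T$ be a type theory. (1) If $B\vdash^{\mathcal T}_{\equiv}\Delta_1:\sigma$ and $\Delta_1\to\Delta_2$, then $\|\Delta_1\|=_\beta\|\Delta_2\|$. (2) For $\mathcal R\in\{=_\beta,=_{\beta\eta}\}$: if $B\vdash^{\mathcal T}_{\mathcal R}\Delta_1:\sigma$ and $\Delta_1\to\Delta_2$, then $\|\Delta_1\|\mathrel{\mathcal R}\|\Delta_2\|$. (3) If $B\vdash^{\mathcal T}_{=_{\beta\eta}}\Delta_1:\sigma$ and $\Delta_1\to_\eta\Delta_2$, then $\|\Delta_1\|=_\eta\|\Delta_2\|$.
   Context: Type atoms: a set $\mathbb{A}$ of symbols; $\omega$ denotes a distinguished atom (the universal type). Intersection types over $\mathbb A$: $\sigma::= a\mid\sigma\to\sigma\mid\sigma\cap\sigma$ ($a\in\mathbb A$). An intersection type theory $\mathcal T$ over $\mathbb A$ is a set of inequalities $\sigma\le\tau$ (written $\sigma\le_{\mathcal T}\tau$) closed under (refl) $\sigma\le\sigma$; (incl) $\sigma\cap\tau\le\sigma$ and $\sigma\cap\tau\le\tau$; (glb) $\rho\le\sigma$ and $\rho\le\tau$ imply $\rho\le\sigma\cap\tau$; (trans) $\sigma\le\tau$ and $\tau\le\rho$ imply $\sigma\le\rho$. $\Delta$-terms: $\Delta::=u_\Delta\mid x\mid\lambda x{:}\sigma.\Delta\mid\Delta\,\Delta\mid\langle\Delta,\Delta\rangle\mid pr_1\Delta\mid pr_2\Delta\mid\Delta^\sigma$, where for every (not necessarily typable) $\Delta$-term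 $\Delta$ there is a constant $u_\Delta$. The essence $\|\Delta\|$ is the pure $\lambda$-term defined by $\|x\|=x$, $\|u_\Delta\|=\|\Delta\|$, $\|\Delta^\sigma\|=\|\Delta\|$, $\|\lambda x{:}\sigma.\Delta\|=\lambda x.\|\Delta\|$, $\|\Delta_1\Delta_2\|=\|\Delta_1\|\,\|\Delta_2\|$, $\|\langle\Delta_1,\Delta_2\rangle\|=\|\Delta_1\|$, $\|pr_i\Delta\|=\|\Delta\|$. Let $\mathcal R$ be one of $\equiv$ (syntactic identity up to $\alpha$), $=_\beta$, $=_{\beta\eta}$ on pure $\lambda$-terms. A basis $B$ is a finite set of declarations $x{:}\sigma$ with distinct variables. The typed system $\Delta^{\mathcal T}_{\mathcal R}$ derives $B\vdash^{\mathcal T}_{\mathcal R}\Delta:\sigma$ by: (top) $B\vdash u_\Delta:\omega$ if $\omega\in\mathbb A$; (ax) $B\vdash x:\sigma$ if $x{:}\sigma\in B$; ($\to$I) from $B,x{:}\sigma\vdash\Delta:\tau$ infer $B\vdash\lambda x{:}\sigma.\Delta:\sigma\to\tau$; ($\to$E) from $B\vdash\Delta_1:\sigma\to\tau$ and $B\vdash\Delta_2:\sigma$ infer $B\vdash\Delta_1\Delta_2:\tau$; ($\cap$I) from $B\vdash\Delta_1:\sigma$, $B\vdash\Delta_2:\tau$ and $\|\Delta_1\|\mathrel{\mathcal R}\|\Delta_2\|$ infer $B\vdash\langle\Delta_1,\Delta_2\rangle:\sigma\cap\tau$; ($\cap$E$_1$) from $B\vdash\Delta:\sigma\cap\tau$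 infer $B\vdash pr_1\Delta:\sigma$; ($\cap$E$_2$) from $B\vdash\Delta:\sigma\cap\tau$ infer $B\vdash pr_2\Delta:\tau$; ($\le_{\mathcal T}$) from $B\vdash\Delta:\sigma$ and $\sigma\le_{\mathcal T}\tau$ infer $B\vdash\Delta^\tau:\tau$. Substitution $\Delta_1[\Delta_2/x]$ is capture-avoiding, with $u_{\Delta_1}[\Delta_2/x]=u_{\Delta_1[\Delta_2/x]}$ and $(\Delta_1^\sigma)[\Delta_2/x]=(\Delta_1[\Delta_2/x])^\sigma$. Notions of reduction: $(\beta)$ $(\lambda x{:}\sigma.\Delta_1)\Delta_2\to\Delta_1[\Delta_2/x]$; $(pr_i)$ $pr_i\langle\Delta_1,\Delta_2\rangle\to\Delta_i$ ($i=1,2$); $(\eta)$ $\lambda x{:}\sigma.\Delta\,x\to\Delta$ if $x\notin FV(\Delta)$. ($(\lambda x{:}\sigma.\Delta_1)^\tau\Delta_2$ is not a redex.) $\to$ denotes the contextual closure of $(\beta)$ and $(pr_i)$, and $\to_\eta$ that of $(\eta)$, where no reduction is performed inside the index $\Delta$ of a constant $u_\Delta$. *)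

(* De Bruijn representation of variables (alpha-equivalence
   classes). *)
From Stdlib Require Import List Arith.
Import ListNotations.
Set Implicit Arguments.

Inductive ty (A : Type) : Type :=
| Atom : A -> ty A
| Arrow : ty A -> ty A -> ty A
| Inter : ty A -> ty A -> ty A.
Arguments Atom {A}. Arguments Arrow {A}. Arguments Inter {A}.

Definition is_type_theory (A : Type) (le : ty A -> ty A -> Prop) : Prop :=
  (forall s, le s s) /\
  (forall s t, le (Inter s t) s) /\
  (forall s t, le (Inter s t) t) /\
  (forall r s t, le r s -> le r t -> le r (Inter s t)) /\
  (forall r s t, le r s -> le s t -> le r t).

Inductive lterm : Type :=
| LVar : nat -> lterm
| LAbs : lterm -> lterm
| LApp : lterm -> lterm -> lterm.

Fixpoint llift (c : nat) (t : lterm) : lterm :=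
  match t with
  | LVar n => if n <? c then LVar n else LVar (S n)
  | LAbs t => LAbs (llift (S c) t)
  | LApp t u => LApp (llift c t) (llift c u)
  end.

Fixpoint lsubst (j : nat) (s : lterm) (t : lterm) : lterm :=
  match t with
  | LVar n => if n =? j then s else if n <? j then LVar n else LVar (pred n)
  | LAbs t => LAbs (lsubst (S j) (llift 0 s) t)
  | LApp t u => LApp (lsubst j s t) (lsubst j s u)
  end.

Inductive lbeta : lterm -> lterm -> Prop :=
| lb_redex : forall t u, lbeta (LApp (LAbs t) u) (lsubst 0 u t)
| lb_abs : forall t t', lbeta t t' -> lbeta (LAbs t) (LAbs t')
| lb_appl : forall t t' u, lbeta t t' -> lbeta (LApp t u) (LApp t' u)
| lb_appr : forall t u u', lbeta u u' -> lbeta (LApp t u) (LApp t u').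

(* one-step eta (contextual closure): \x. M x -> M, x not free in M *)
Inductive leta : lterm -> lterm -> Prop :=
| le_redex : forall t, leta (LAbs (LApp (llift 0 t) (LVar 0))) t
| le_abs : forall t t', leta t t' -> leta (LAbs t) (LAbs t')
| le_appl : forall t t' u, leta t t' -> leta (LApp t u) (LApp t' u)
| le_appr : forall t u u', leta u u' -> leta (LApp t u) (LApp t u').

Inductive conv (r : lterm -> lterm -> Prop) : lterm -> lterm -> Prop :=
| conv_step : forall t u, r t u -> conv r t u
| conv_refl : forall t, conv r t t
| conv_sym : forall t u, conv r t u -> conv r u t
| conv_trans : forall t u v, conv r t u -> conv r u v -> conv r t v.

Definition lbetaeta (t u : lterm) : Prop := lbeta t u \/ leta t u.

Definition beta_eq : lterm -> lterm -> Prop := conv lbeta.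
Definition eta_eq : lterm -> lterm -> Prop := conv leta.
Definition betaeta_eq : lterm -> lterm -> Prop := conv lbetaeta.
Definition syn_eq : lterm -> lterm -> Prop := @eq lterm.

Inductive dterm (A : Type) : Type :=
| DU : dterm A -> dterm A                 (* the constant u_Delta *)
| DVar : nat -> dterm A
| DLam : ty A -> dterm A -> dterm A
| DApp : dterm A -> dterm A -> dterm A
| DPair : dterm A -> dterm A -> dterm A
| DPr1 : dterm A -> dterm A
| DPr2 : dterm A -> dterm A
| DCast : dterm A -> ty A -> dterm A.
Arguments DU {A}. Arguments DVar {A}. Arguments DLam {A}. Arguments DApp {A}.
Arguments DPair {A}. Arguments DPr1 {A}. Arguments DPr2 {A}. Arguments DCast {A}.

Fixpoint ess (A : Type) (d : dterm A) : lterm :=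
  match d with
  | DU d => ess d
  | DVar n => LVar n
  | DLam _ d => LAbs (ess d)
  | DApp d e => LApp (ess d) (ess e)
  | DPair d _ => ess d
  | DPr1 d => ess d
  | DPr2 d => ess d
  | DCast d _ => ess d
  end.

(* lifting and substitution go inside constants: u_D[..] = u_{D[..]} *)
Fixpoint dlift (A : Type) (c : nat) (d : dterm A) : dterm A :=
  match d with
  | DU d => DU (dlift c d)
  | DVar n => if n <? c then DVar n else DVar (S n)
  | DLam s d => DLam s (dlift (S c) d)
  | DApp d e => DApp (dlift c d) (dlift c e)
  | DPair d e => DPair (dlift c d) (dlift c e)
  | DPr1 d => DPr1 (dlift c d)
  | DPr2 d => DPr2 (dlift c d)
  | DCast d s => DCast (dlift c d) s
  end.

Fixpoint dsubst (A : Type) (j : nat) (s : dterm A) (d : dterm A) : dterm A :=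
  match d with
  | DU d => DU (dsubst j s d)
  | DVar n => if n =? j then s else if n <? j then DVar n else DVar (pred n)
  | DLam t d => DLam t (dsubst (S j) (dlift 0 s) d)
  | DApp d e => DApp (dsubst j s d) (dsubst j s e)
  | DPair d e => DPair (dsubst j s d) (dsubst j s e)
  | DPr1 d => DPr1 (dsubst j s d)
  | DPr2 d => DPr2 (dsubst j s d)
  | DCast d t => DCast (dsubst j s d) t
  end.

(* -> : contextual closure of (beta) and (pr_i), never inside u_Delta.
   Note (lambda x:s. D1)^t D2 is not a redex. *)
Inductive dstep (A : Type) : dterm A -> dterm A -> Prop :=
| ds_beta : forall s d1 d2, dstep (DApp (DLam s d1) d2) (dsubst 0 d2 d1)
| ds_pr1 : forall d1 d2, dstep (DPr1 (DPair d1 d2)) d1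
| ds_pr2 : forall d1 d2, dstep (DPr2 (DPair d1 d2)) d2
| ds_lam : forall s d d', dstep d d' -> dstep (DLam s d) (DLam s d')
| ds_appl : forall d d' e, dstep d d' -> dstep (DApp d e) (DApp d' e)
| ds_appr : forall d e e', dstep e e' -> dstep (DApp d e) (DApp d e')
| ds_pairl : forall d d' e, dstep d d' -> dstep (DPair d e) (DPair d' e)
| ds_pairr : forall d e e', dstep e e' -> dstep (DPair d e) (DPair d e')
| ds_prj1 : forall d d', dstep d d' -> dstep (DPr1 d) (DPr1 d')
| ds_prj2 : forall d d', dstep d d' -> dstep (DPr2 d) (DPr2 d')
| ds_cast : forall d d' s, dstep d d' -> dstep (DCast d s) (DCast d' s).

Inductive deta (A : Type) : dterm A -> dterm A -> Prop :=
| de_redex : forall s d, deta (DLam s (DApp (dlift 0 d) (DVar 0))) d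
| de_lam : forall s d d', deta d d' -> deta (DLam s d) (DLam s d')
| de_appl : forall d d' e, deta d d' -> deta (DApp d e) (DApp d' e)
| de_appr : forall d e e', deta e e' -> deta (DApp d e) (DApp d e')
| de_pairl : forall d d' e, deta d d' -> deta (DPair d e) (DPair d' e)
| de_pairr : forall d e e', deta e e' -> deta (DPair d e) (DPair d e')
| de_prj1 : forall d d', deta d d' -> deta (DPr1 d) (DPr1 d')
| de_prj2 : forall d d', deta d d' -> deta (DPr2 d) (DPr2 d')
| de_cast : forall d d' s, deta d d' -> deta (DCast d s) (DCast d' s).

(* ---------- The typed system Delta^T_R ----------
   om = Some w means the distinguished atom omega (= w) belongs to A;
   om = None means omega is not in A.
   A basis is a finite list; position n declares (or not) de Bruijn variable n. *)
Definition basis (A : Type) := list (option (ty A)).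

Inductive typing (A : Type) (om : option A) (le : ty A -> ty A -> Prop)
    (R : lterm -> lterm -> Prop) : basis A -> dterm A -> ty A -> Prop :=
| t_top : forall B d w, om = Some w -> typing om le R B (DU d) (Atom w)
| t_ax : forall B n s, nth_error B n = Some (Some s) -> typing om le R B (DVar n) s
| t_lam : forall B s t d, typing om le R (Some s :: B) d t ->
    typing om le R B (DLam s d) (Arrow s t)
| t_app : forall B s t d1 d2, typing om le R B d1 (Arrow s t) ->
    typing om le R B d2 s -> typing om le R B (DApp d1 d2) t
| t_pair : forall B s t d1 d2, typing om le R B d1 s -> typing om le R B d2 t ->
    R (ess d1) (ess d2) -> typing om le R B (DPair d1 d2) (Inter s t)
| t_pr1 : forall B s t d, typing om le R B d (Inter s t) -> typing om le R B (DPr1 d) s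
| t_pr2 : forall B s t d, typing om le R B d (Inter s t) -> typing om le R B (DPr2 d) t
| t_le : forall B s t d, typing om le R B d s -> le s t -> typing om le R B (DCast d t) t.

(* Essence commutes with lifting and substitution, so a beta-step on a
   Delta-term is a beta-step on its essence, and an eta-step is an eta-step.
   A projection step pr_i <D1, D2> -> D_i leaves the essence ||D1|| unchanged
   for i = 1; for i = 2 it replaces it by ||D2||, which typing of the pair
   guarantees to be R-related to ||D1||. *)
From Stdlib Require Import List Arith.

Lemma ess_dlift (A : Type) (d : dterm A) (c : nat) :
  ess (dlift c d) = llift c (ess d).
Proof.
  revert c; induction d; intros c; simpl; try congruence.
  destruct (n <? c); reflexivity.
Qed.

Lemma ess_dsubst (A : Type) (d s : dterm A) (j : nat) :
  ess (dsubst j s d) = lsubst j (ess s) (ess d).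
Proof.
  revert j s; induction d; intros j s; simpl; try congruence.
  - destruct (n =? j); [reflexivity|]. destruct (n <? j); reflexivity.
  - rewrite IHd, ess_dlift. reflexivity.
Qed.

Lemma conv_map (r : lterm -> lterm -> Prop) (f : lterm -> lterm) :
  (forall t u, r t u -> r (f t) (f u)) ->
  forall t u, conv r t u -> conv r (f t) (f u).
Proof.
  intros Hf t u H; induction H.
  - apply conv_step; auto.
  - apply conv_refl.
  - apply conv_sym; auto.
  - eapply conv_trans; eauto.
Qed.

Definition lcompatible (r : lterm -> lterm -> Prop) : Prop :=
  (forall t u, r t u -> r (LAbs t) (LAbs u)) /\
  (forall t t' u, r t t' -> r (LApp t u) (LApp t' u)) /\
  (forall t u u', r u u' -> r (LApp t u) (LApp t u')).

Lemma lbeta_compatible : lcompatible lbeta.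
Proof. repeat split; constructor; assumption. Qed.

Lemma leta_compatible : lcompatible leta.
Proof. repeat split; constructor; assumption. Qed.

Lemma lbetaeta_compatible : lcompatible lbetaeta.
Proof.
  unfold lbetaeta; repeat split; intros * [H | H];
    solve [left; constructor; exact H | right; constructor; exact H].
Qed.

Section DstepEssence.

Context {A : Type} {om : option A} {le : ty A -> ty A -> Prop}.
Context {R r : lterm -> lterm -> Prop}.
Hypothesis r_compatible : lcompatible r.
Hypothesis lbeta_incl : forall t u, lbeta t u -> r t u.
Hypothesis R_incl : forall t u, R t u -> conv r t u.

Lemma dstep_ess_conv {B : basis A} {d1 d2 : dterm A} {s : ty A} :
  typing om le R B d1 s -> dstep d1 d2 -> conv r (ess d1) (ess d2).
Proof.
  destruct r_compatible as (r_abs & r_appl & r_appr).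
  intros Ht Hstep; revert B s Ht.
  induction Hstep; intros B0 s0 Ht; simpl;
    try (inversion Ht; subst).
  - rewrite ess_dsubst. apply conv_step, lbeta_incl, lb_redex.
  - apply conv_refl.
  - match goal with Hp : typing _ _ _ _ (DPair _ _) _ |- _ =>
      inversion Hp; subst; auto end.
  - apply (conv_map r LAbs); eauto.
  - apply (conv_map r (fun x => LApp x (ess e))); eauto.
  - apply (conv_map r (fun x => LApp (ess d) x)); eauto.
  - eauto.
  - (* the essence of a pair ignores its second component *)
    apply conv_refl.
  - eauto.
  - eauto.
  - eauto.
Qed.

End DstepEssence.

Lemma deta_ess_eta_eq (A : Type) (d1 d2 : dterm A) :
  deta d1 d2 -> eta_eq (ess d1) (ess d2).
Proof.
  destruct leta_compatible as (r_abs & r_appl & r_appr).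
  unfold eta_eq; intros H; induction H; simpl; auto.
  - rewrite ess_dlift. apply conv_step, le_redex.
  - apply (conv_map leta LAbs); auto.
  - apply (conv_map leta (fun x => LApp x (ess e))); auto.
  - apply (conv_map leta (fun x => LApp (ess d) x)); auto.
  - apply conv_refl.
Qed.

Theorem mainTheorem9 (A : Type) (om : option A) (le : ty A -> ty A -> Prop)
  (HT : is_type_theory le) :
  (forall (B : basis A) (d1 d2 : dterm A) (s : ty A),
      typing om le syn_eq B d1 s -> dstep d1 d2 -> beta_eq (ess d1) (ess d2)) /\
  (forall R : lterm -> lterm -> Prop, (R = beta_eq \/ R = betaeta_eq) ->
   forall (B : basis A) (d1 d2 : dterm A) (s : ty A),
      typing om le R B d1 s -> dstep d1 d2 -> R (ess d1) (ess d2)) /\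
  (forall (B : basis A) (d1 d2 : dterm A) (s : ty A),
      typing om le betaeta_eq B d1 s -> deta d1 d2 -> eta_eq (ess d1) (ess d2)).
Proof.
  split; [|split].
  - intros B d1 d2 s Ht Hs.
    assert (syn_incl : forall t u, syn_eq t u -> beta_eq t u)
      by (intros t u <-; apply conv_refl).
    exact (dstep_ess_conv lbeta_compatible (fun _ _ H => H) syn_incl Ht Hs).
  - intros R [-> | ->] B d1 d2 s Ht Hs.
    + exact (dstep_ess_conv lbeta_compatible (fun _ _ H => H) (fun _ _ H => H) Ht Hs).
    + exact (dstep_ess_conv lbetaeta_compatible (fun _ _ H => or_introl H)
               (fun _ _ H => H) Ht Hs).
  - intros B d1 d2 s _; apply deta_ess_eta_eq.
Qed.
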